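(* Let $\langle X,\tau\rangle$ be a first-countable Hausdorff space containing $[0,1)$ as a dense and co-dense subset whose subspace topology is the Sorgenfrey topology on $[0,1)$. For $U\subseteq X$ write $\breve U=U\cap[0,1)$. For $z\in X\setminus[0,1)$ let $\mathsf L(z)$ be the set of $x\in[0,1]$ such that some sequence in $[0,1)$ converges to $z$ in $\langle X,\tau\rangle$ and to $x$ in the Euclidean topology of $[0,1]$; let $\mathsf m(z)=\min\mathsf L(z)$ (which exists since $\mathsf L(z)$ is nonempty and well-ordered by $<$) and $\mathsf M(z)=\sup\mathsf L(z)$. Let $z\in X\setminus[0,1)$ and $a<b$ reals. Then: (i) there is an open neighborhood $U$ of $z$ with $y<\mathsf M(z)$ for all $y\in\breve U$; (ii) for every open neighborhood $U$ of $z$ with $\breve U=[a,b)$ we have $\mathsf M(z)\le b$; (iii) for every $x\in[0,1)$ with $x<\mathsf m(z)$ there is an open neighborhood $U$ of $z$ with $x<y$ for all $y\in\breve U$; (iv) for every $x\in[0,1)$ and every open neighborhood $U$ of $z$, if $x<y$ for all $y\in\breve U$ then $x<\mathsf m(z)$; (v) every open neighborhood $U$ of $z$ contains some $x\in\breve U$ with $x<\mathsf m(z)$.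
   Context: The Sorgenfrey topology on $[0,1)$ is generated by the sets $[a,b)\cap[0,1)$. A subset is co-dense if its complement is dense. *)

From HB Require Import structures.
From mathcomp Require Import all_boot all_order all_algebra.
From mathcomp Require Import all_classical all_reals all_analysis.
Set Implicit Arguments. Unset Strict Implicit. Unset Printing Implicit Defensive.
Import Order.TTheory GRing.Theory Num.Theory.
Import numFieldNormedType.Exports.
Local Open Scope classical_set_scope.
Local Open Scope ring_scope.

Definition I01 {R : realType} : set R := [set x | 0 <= x /\ x < 1].

Definition sorgenfrey_open {R : realType} (A : set R) : Prop :=
  A `<=` I01 /\
  forall x, A x -> exists a b : R,
    a <= x /\ x < b /\ [set y | a <= y /\ y < b] `&` I01 `<=` A.

Definition first_countable (X : topologicalType) : Prop :=
  forall x : X, exists B : nat -> set X,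
    (forall n, open (B n) /\ B n x) /\
    (forall U, nbhs x U -> exists n, B n `<=` U).

(* The copy of [0,1) inside X is given by e : R -> X restricted to [0,1). *)
Definition breve {R : realType} {X : Type} (e : R -> X) (U : set X) : set R :=
  [set y | I01 y /\ U (e y)].

Definition Lset {R : realType} {X : topologicalType} (e : R -> X) (z : X)
  : set R :=
  [set x : R | 0 <= x <= 1 /\
     exists s : nat -> R, (forall n, I01 (s n)) /\
       ((e \o s) @ \oo --> z) /\ (s @ \oo --> x)].

Definition msmall {R : realType} {X : topologicalType} (e : R -> X) (z : X) : R :=
  inf (Lset e z).
Definition Mbig {R : realType} {X : topologicalType} (e : R -> X) (z : X) : R :=
  sup (Lset e z).

From HB Require Import structures.
From mathcomp Require Import all_boot all_order all_algebra.
From mathcomp Require Import all_classical all_reals all_analysis.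
Import Order.TTheory GRing.Theory Num.Theory.
Import numFieldNormedType.Exports.
Local Open Scope classical_set_scope.
Local Open Scope ring_scope.

(* Fix a countable open local base B at z and replace it by the decreasing
   base  nested B n = B 0 ∩ ... ∩ B n.  Two facts drive everything:
   - (cvg_from_below) a sequence of [0,1) tending to z in X and to x in the
     Euclidean topology eventually lies strictly below x: otherwise, by the
     Hausdorff property, a Sorgenfrey neighbourhood [x, b') of x would be
     separated from a neighbourhood of z, yet contain terms of the sequence;
   - (cluster_point) if every nested B n contains a point e y with y in [0,1)
     satisfying P n y, a Bolzano-Weierstrass subsequence of such points
     converges to z in X and to some w in L(z).
   From the second fact, L(z) is nonempty, contains its infimum (so min L(z)
   exists), and any property of points of [0,1) that cannot hold near z along
   a sequence with limit in L(z) fails on the trace of some neighbourhood of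
   z; this gives (iii) directly and, together with the first fact, (i).
   Item (ii) is a limit argument, and (v), hence (iv), follows from the
   first fact applied to a sequence realising min L(z). *)

Section NestedLocalBase.
Context {X : topologicalType} (B : nat -> set X).

Fixpoint nested (n : nat) : set X :=
  if n is m.+1 then nested m `&` B m.+1 else B 0%N.

Lemma nested_sub {n k : nat} : (k <= n)%N -> nested n `<=` B k.
Proof.
elim: n k => [|n IH] k /=; first by rewrite leqn0 => /eqP ->.
rewrite leq_eqVlt => /orP[/eqP -> | /IH sub_k]; first by move=> x [].
by move=> x [/sub_k].
Qed.

Lemma nested_mono {n m : nat} : (n <= m)%N -> nested m `<=` nested n.
Proof.
elim: m n => [|m IH] n /=; first by rewrite leqn0 => /eqP ->.
rewrite leq_eqVlt => /orP[/eqP -> // | /IH sub_n].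
by move=> x [/sub_n].
Qed.

Context {z : X}.

Lemma nested_open (hB : forall n, open (B n) /\ B n z) (n : nat) :
  open (nested n) /\ nested n z.
Proof.
elim: n => [|n [open_n z_n]] /=; first exact: hB.
by have [open_B z_B] := hB n.+1; split; [exact: openI | split].
Qed.

Lemma nested_cvg (hloc : forall U, nbhs z U -> exists n, B n `<=` U)
    (g : nat -> X) :
  (forall n, nested n (g n)) -> g @ \oo --> z.
Proof.
move=> hg U /hloc[N BNU]; exists N => // n /= Nn.
exact: BNU _ (nested_sub Nn _ (hg n)).
Qed.

End NestedLocalBase.
Arguments nested_sub {X B n k}.
Arguments nested_mono {X B n m}.
Arguments nested_open {X B z}.
Arguments nested_cvg {X B z}.

Lemma increasing_seq_ge {f : nat -> nat} : increasing_seq f -> forall n, (n <= f n)%N.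
Proof.
move=> /increasing_seqP f_incr; elim=> [//|n IH].
exact: leq_ltn_trans IH (f_incr n).
Qed.

Section SorgenfreyEmbedding.
Context {R : realType} {X : topologicalType} {e : R -> X}.
Hypothesis hT2 : hausdorff_space X.
Hypothesis hsub : forall A : set R, A `<=` I01 ->
  (sorgenfrey_open A <-> exists U : set X, open U /\ A = breve e U).
Context {z : X}.
Hypothesis hz : ~ (e @` I01) z.

Lemma cvg_from_below {s : nat -> R} {x : R} :
  (forall n, I01 (s n)) -> (e \o s) @ \oo --> z -> s @ \oo --> x ->
  0 <= x <= 1 -> \forall n \near \oo, s n < x.
Proof.
move=> Is es sx /andP[x0]; rewrite le_eqVlt => /orP[/eqP -> | x1].
  by near=> n; exact: (Is n).2.
have Ix : I01 x by [].
have exz : e x != z by apply/eqP => exz; apply: hz; exists x.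
move: hT2; rewrite open_hausdorff => /(_ _ _ exz)[[A V] /= [xA zV] [oA oV AV0]].
rewrite inE in xA; rewrite inE in zV.
(* breve e A is Sorgenfrey-open, so it contains a basic set [a', b') ∋ x. *)
have so_A : sorgenfrey_open (breve e A).
  by apply/(hsub _ (fun y (h : breve e A y) => h.1)); exists A.
have [a' [b' [a'x [xb' sub_A]]]] := so_A.2 x (conj Ix xA).
have near_V : \forall n \near \oo, V (e (s n)).
  by apply: es; exact: open_nbhs_nbhs.
have near_b' : \forall n \near \oo, s n < b' by exact: cvgr_lt sx _ xb'.
near=> n; rewrite ltNge; apply/negP => xs.
have [_ As] : breve e A (s n).
  by apply: sub_A; split => //; split; [exact: le_trans a'x xs | near: n].
suff : (A `&` V) (e (s n)) by move/eqP: AV0 => ->.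
by split => //; near: n.
Unshelve. all: end_near.
Qed.

Lemma msmall_le {x : R} : Lset e z x -> msmall e z <= x.
Proof. by apply: ge_inf; exists 0 => y [/andP[]]. Qed.

Context {B : nat -> set X}.
Hypothesis hB : forall n, open (B n) /\ B n z.
Hypothesis hloc : forall U, nbhs z U -> exists n, B n `<=` U.

Lemma cluster_point (P : nat -> R -> Prop) :
  (forall n k y, (n <= k)%N -> P k y -> P n y) ->
  (forall n, exists y, I01 y /\ nested B n (e y) /\ P n y) ->
  exists (u : nat -> R) (w : R), (forall n, I01 (u n) /\ P n (u n)) /\
    (e \o u) @ \oo --> z /\ u @ \oo --> w /\ Lset e z w.
Proof.
move=> P_anti hP.
pose y n := projT1 (cid (hP n)).
have hy n : I01 (y n) /\ nested B n (e (y n)) /\ P n (y n) := projT2 (cid (hP n)).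
have y_bnd : bounded_fun y.
  rewrite /bounded_near; near=> M => n _ /=.
  have [y0 y1] := (hy n).1; rewrite ger0_norm //; apply: le_trans (ltW y1) _.
  by near: M; exact: nbhs_pinfty_ge.
have [f f_incr cvg_yf] := bolzano_weierstrass y_bnd.
have f_ge := increasing_seq_ge f_incr.
set w := lim ((y \o f) @ \oo).
have Iu n : I01 ((y \o f) n) by exact: (hy (f n)).1.
have euz : (e \o (y \o f)) @ \oo --> z.
  by apply: (nested_cvg hloc) => n; exact: nested_mono (f_ge n) _ (hy (f n)).2.1.
have w01 : 0 <= w <= 1.
  apply/andP; split; first by apply: (cvgr_to_ge cvg_yf); near=> n; exact: (Iu n).1.
  by apply: (cvgr_to_le cvg_yf); near=> n; exact: ltW (Iu n).2.
exists (y \o f), w; split; last by do 3!split => //; exists (y \o f).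
by move=> n; split => //; exact: P_anti (f_ge n) (hy (f n)).2.2.
Unshelve. all: end_near.
Qed.

Lemma nbhs_avoiding (Q : R -> Prop) :
  (forall (u : nat -> R) (w : R), (forall n, I01 (u n) /\ Q (u n)) ->
     (e \o u) @ \oo --> z -> u @ \oo --> w -> Lset e z w -> False) ->
  exists U : set X, open U /\ U z /\ forall y, breve e U y -> ~ Q y.
Proof.
move=> noQ; apply: contrapT => no_U.
have hQ n : exists y, I01 y /\ nested B n (e y) /\ Q y.
  apply: contrapT => no_y; apply: no_U; exists (nested B n).
  have [open_n z_n] := nested_open hB n.
  by split => //; split => // y [Iy ny] Qy; apply: no_y; exists y.
have [u [w [hu [euz [uw Lw]]]]] :=
  cluster_point (fun _ => Q) (fun _ _ _ _ => id) hQ.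
exact: noQ hu euz uw Lw.
Qed.

Hypothesis hdense : dense (e @` I01).

(* By density, every nested B n meets the copy of [0,1); hence L(z) is
   nonempty. *)
Lemma Lset_nonempty : Lset e z !=set0.
Proof.
have hT n : exists y, I01 y /\ nested B n (e y) /\ True.
  have [open_n z_n] := nested_open hB n.
  have [x [nx [y Iy yx]]] := hdense (nested B n) (ex_intro _ z z_n) open_n.
  by exists y; rewrite yx.
have [u [w [_ [_ [_ Lw]]]]] :=
  cluster_point (fun _ _ => True) (fun _ _ _ _ => id) hT.
by exists w.
Qed.

(* L(z) contains its infimum: points of L(z) close to m(z) provide, in each
   nested B n, points below m(z) + 1/(n+1), whose cluster point is m(z). *)
Lemma msmall_in_Lset : Lset e z (msmall e z).
Proof.
set m := msmall e z.
have lb_L : has_lbound (Lset e z) by exists 0 => x [/andP[]].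
have hP n : exists y, I01 y /\ nested B n (e y) /\ y < m + n.+1%:R^-1.
  have eps_gt0 : 0 < n.+1%:R^-1 :> R by rewrite invr_gt0 ltr0n.
  have [l [_ [s [Is [es sl]]]] lm] :=
    inf_adherent eps_gt0 (conj Lset_nonempty lb_L).
  have near_n : \forall k \near \oo, nested B n (e (s k)).
    by apply: es; apply: open_nbhs_nbhs; exact: nested_open hB n.
  have near_m : \forall k \near \oo, s k < m + n.+1%:R^-1 by exact: cvgr_lt sl _ lm.
  by have [k [nk mk]] := filter_ex (filterI near_n near_m); exists (s k).
have P_anti n k y : (n <= k)%N -> y < m + k.+1%:R^-1 -> y < m + n.+1%:R^-1.
  move=> nk /lt_le_trans; apply.
  by rewrite lerD2l lef_pV2 ?posrE ?ltr0n // ler_nat ltnS.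
have [u [w [hu [_ [uw Lw]]]]] := cluster_point _ P_anti hP.
suff -> : m = w by [].
apply/eqP; rewrite eq_le msmall_le //= leNgt; apply/negP => /ltr_add_invr[k mkw].
have near_w : \forall n \near \oo, m + k.+1%:R^-1 < u n by exact: cvgr_gt uw _ mkw.
have [n [un kn]] := filter_ex (filterI near_w (nbhs_infty_ge k)).
by move: (lt_trans un (P_anti _ _ _ kn (hu n).2)); rewrite ltxx.
Qed.

Lemma nbhs_below_Mbig :
  exists U : set X, open U /\ U z /\ forall y, breve e U y -> y < Mbig e z.
Proof.
have [U [oU [Uz notMy]]] : exists U : set X, open U /\ U z /\
    forall y, breve e U y -> ~ (Mbig e z <= y).
  apply: nbhs_avoiding => u w hu euz uw Lw.
  have wM : w <= Mbig e z by apply: ub_le_sup => //; exists 1 => x [/andP[]].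
  have [n un] := filter_ex (cvg_from_below (fun n => (hu n).1) euz uw Lw.1).
  by move: (lt_le_trans un (le_trans wM (hu n).2)); rewrite ltxx.
by exists U; split => //; split => // y /notMy; rewrite leNgt => /negP/negbNE.
Qed.

Lemma Mbig_le_of_nbhs (U : set X) (c : R) : open U -> U z ->
  (forall y, breve e U y -> y <= c) -> Mbig e z <= c.
Proof.
move=> oU Uz Uc; apply: ge_sup; first exact: Lset_nonempty.
move=> x [_ [s [Is [es sx]]]]; apply: (cvgr_to_le sx).
have : \forall n \near \oo, U (e (s n)) by apply: es; exact: open_nbhs_nbhs.
by apply: filterS => n Us; exact: Uc.
Qed.

Lemma nbhs_above (x : R) : x < msmall e z ->
  exists U : set X, open U /\ U z /\ forall y, breve e U y -> x < y.
Proof.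
move=> xm.
have [U [oU [Uz noty]]] : exists U : set X, open U /\ U z /\
    forall y, breve e U y -> ~ (y <= x).
  apply: nbhs_avoiding => u w hu _ uw Lw.
  have wx : w <= x by apply: (cvgr_to_le uw); near=> n; exact: (hu n).2.
  by move: (le_lt_trans (le_trans (msmall_le Lw) wx) xm); rewrite ltxx.
by exists U; split => //; split => // y /noty; rewrite leNgt => /negP/negbNE.
Unshelve. all: end_near.
Qed.

(* (v): every neighbourhood of z traces [0,1) below m(z), since m(z) is the
   limit, from below, of a sequence converging to z. *)
Lemma nbhs_meets_below_msmall (U : set X) : open U -> U z ->
  exists y, breve e U y /\ y < msmall e z.
Proof.
move=> oU Uz; have [m01 [s [Is [es sm]]]] := msmall_in_Lset.
have near_U : \forall n \near \oo, U (e (s n)) by apply: es; exact: open_nbhs_nbhs.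
have [n [Us sn]] := filter_ex (filterI near_U (cvg_from_below Is es sm m01)).
by exists (s n); split => //; split.
Qed.

End SorgenfreyEmbedding.

Theorem mainTheorem14 (R : realType) (X : topologicalType) (e : R -> X)
  (hfc : first_countable X) (hT2 : hausdorff_space X)
  (he_inj : {in I01 &, injective e})
  (hdense : dense (e @` I01))
  (hcodense : dense (~` (e @` I01)))
  (hsub : forall A : set R, A `<=` I01 ->
     (sorgenfrey_open A <-> exists U : set X, open U /\ A = breve e U))
  (z : X) (hz : ~ (e @` I01) z) (a b : R) (hab : a < b) :
  (* the minimum of L(z) exists, so msmall e z = min L(z) *)
  (Lset e z (msmall e z) /\ forall x, Lset e z x -> msmall e z <= x) /\
  (* (i) *)
  (exists U : set X, open U /\ U z /\ forall y, breve e U y -> y < Mbig e z) /\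
  (* (ii) *)
  (forall U : set X, open U -> U z -> breve e U = [set y | a <= y /\ y < b] ->
     Mbig e z <= b) /\
  (* (iii) *)
  (forall x, I01 x -> x < msmall e z ->
     exists U : set X, open U /\ U z /\ forall y, breve e U y -> x < y) /\
  (* (iv) *)
  (forall x (U : set X), I01 x -> open U -> U z ->
     (forall y, breve e U y -> x < y) -> x < msmall e z) /\
  (* (v) *)
  (forall U : set X, open U -> U z ->
     exists x, breve e U x /\ x < msmall e z).
Proof.
have [B [hB hloc]] := hfc z.
have below_m := nbhs_meets_below_msmall hT2 hsub hz hB hloc hdense.
split; first by split; [exact: msmall_in_Lset hB hloc hdense
                        | move=> x; exact: msmall_le].
split; first by have := nbhs_below_Mbig hT2 hsub hz hB hloc.
split.
  move=> U oU Uz hU; apply: (Mbig_le_of_nbhs hB hloc hdense U b oU Uz) => y.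
  by rewrite hU => -[_ /ltW].
split; first by move=> x _; exact: nbhs_above hB hloc x.
split; last exact: below_m.
(* (iv) is a consequence of (v). *)
move=> x U _ oU Uz Ux; have [y [Uy ym]] := below_m U oU Uz.
exact: lt_trans (Ux y Uy) ym.
Qed.
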